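(* Let $F$ be a strictly increasing toxicity-rate function with values in $[0,1]$, let $d_1<\dots<d_m$ be fixed dose levels, and let $p\in(0,1/2)$ be the target rate. Suppose that for some index $u^*\ge 2$ we have $F(d_{u^*})=p$ (so $d_{u^*}$ is the MTD) and $F(d_{u^*-1})<p$. Consider the point design defined in the context, using cohorts of size $k\ge1$, started at a dose below $d_{u^*}$, with toxicity responses independent $\mathrm{Bernoulli}(F(x))$ at the assigned dose $x$. Then with positive probability the dose allocations do not converge to $d_{u^*}$.
   Context: Point design: cohorts of $k$ subjects are treated successively, the first at a chosen starting dose. For each level $d_u$ with observations, $\hat F(d_u)$ is the observed toxicity frequency at $d_u$ (possibly monotonized across levels by isotonic regression). After each cohort, the next cohort is allocated to the level whose $\hat F(d_u)$ is closest to $p$; except that if the highest dose $d_u$ for which an estimate is available has $\hat F(d_u)<p$, the design escalates to $d_{u+1}$ (boundary permitting), and if the lowest dose $d_u$ with an estimate has $\hat F(d_u)>p$, it de-escalates to $d_{u-1}$ (boundary permitting). Convergence to $d_{u^*}$ means that from some cohort on, all cohorts are allocated to $d_{u^*}$. *)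

From HB Require Import structures.
From mathcomp Require Import all_boot all_order all_algebra.
From mathcomp Require Import all_classical all_reals all_analysis.
Set Implicit Arguments. Unset Strict Implicit. Unset Printing Implicit Defensive.
Import Order.TTheory GRing.Theory Num.Theory.
Local Open Scope ring_scope.

(* Dose levels are indexed 1..m (as in the paper).
   An outcome array  y : nat -> nat -> nat -> bool  gives, for cohort n
   (n = 0,1,2,...), subject j (j < k) and dose level u, whether that subject
   would experience a toxicity when treated at level u ("potential outcome");
   only y n j (X n) is observed, where X n is the level allocated to cohort n.
   A history h : seq nat lists the levels allocated to cohorts 0..size h - 1. *)

Section PointDesign.
Variables (R : realType) (m k s : nat) (p : R) (y : nat -> nat -> nat -> bool).

Definition ntreated (h : seq nat) (u : nat) : nat := k * count (pred1 u) h.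

Definition ntox (h : seq nat) (u : nat) : nat :=
  \sum_(i < size h) (if nth 0 h i == u then \sum_(j < k) (y i j u : nat) else 0).

(* observed toxicity frequency \hat F(d_u) (meaningful when u \in h) *)
Definition fhat (h : seq nat) (u : nat) : R :=
  (ntox h u)%:R / (ntreated h u)%:R.

Definition observed_levels (h : seq nat) : seq nat :=
  [seq u <- iota 1 m | u \in h].

(* level whose estimate is closest to p; ties broken towards the lowest level *)
Definition closest (h : seq nat) : nat :=
  let vs := observed_levels h in
  foldl (fun b u => if `|fhat h u - p| < `|fhat h b - p| then u else b)
        (head s vs) (behead vs).

Definition next_level (h : seq nat) : nat :=
  let vs := observed_levels h in
  let lo := head s vs in
  let hi := last s vs in
  if (fhat h hi < p) && (hi < m)%N then hi.+1
  else if (p < fhat h lo) && (1 < lo)%N then lo.-1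
  else closest h.

Fixpoint allocs (n : nat) : seq nat :=
  match n with
  | 0 => [:: s]
  | n'.+1 => rcons (allocs n') (next_level (allocs n'))
  end.

Definition alloc (n : nat) : nat := last s (allocs n).

Definition converges_to (u : nat) : Prop :=
  exists N, forall n, (N <= n)%N -> alloc n = u.

End PointDesign.

Local Open Scope classical_set_scope.
Definition mutually_independent_bool {d : measure_display} {T : measurableType d}
  {R : realType} (P : probability T R) {I : eqType} (Z : I -> T -> bool) : Prop :=
  forall (J : seq I) (b : I -> bool), uniq J ->
    fine (P (\bigcap_(i in [set` J]) [set w | Z i w = b i]))
    = \prod_(i <- J) fine (P [set w | Z i w = b i]).

From HB Require Import structures.
From mathcomp Require Import all_boot all_order all_algebra.
From mathcomp Require Import all_classical all_reals all_analysis.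
From mathcomp Require Import lra zify.
Set Implicit Arguments. Unset Strict Implicit. Unset Printing Implicit Defensive.
Import Order.TTheory GRing.Theory Num.Theory.
Local Open Scope ring_scope.
Local Open Scope classical_set_scope.

(* The design can get trapped at the lowest level d_1. If level 1 has been
   used and every other level used so far has observed toxicity frequency 1,
   then the highest observed estimate is 1 > p (no escalation), the lowest
   observed level is 1 (no de-escalation), and no estimate in [0,1] is strictly
   closer to p than that of level 1, because |1 - p| is maximal when p < 1/2.
   So every later cohort is treated at level 1 and the frequency at level 1
   never matters again. A finite number of prescribed outcomes drives the
   design into this trap from any starting level below the MTD: from s >= 2
   all cohorts at levels s, s-1, ..., 2 are toxic; from s = 1 the first
   cohort is toxicity-free and the second, at level 2, is toxic. Each of these
   outcomes has positive probability since 0 <= F(d_1) < p < 1 and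
   0 < F(d_u) <= p for 2 <= u <= u*, so by independence they occur jointly
   with positive probability. *)

Section BooleanEvents.
Variables (d : measure_display) (T : measurableType d) (R : realType).
Variable P : probability T R.

Lemma setC_eq_true (Z : T -> bool) :
  [set w | Z w = false] = ~` [set w | Z w = true].
Proof. by apply/seteqP; split=> w /=; case: (Z w). Qed.

Lemma measurable_eq_bool (Z : T -> bool) (b : bool) :
  measurable [set w | Z w = true] -> measurable [set w | Z w = b].
Proof. by case: b => // mZ; rewrite setC_eq_true; exact: measurableC. Qed.

Lemma prob_eq_bool_gt0 (Z : T -> bool) (q : R) (b : bool) :
  measurable [set w | Z w = true] -> P [set w | Z w = true] = q%:E ->
  (if b then 0 < q else q < 1) -> 0 < fine (P [set w | Z w = b]).
Proof.
case: b => mZ PZ hq; first by rewrite PZ.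
by rewrite setC_eq_true probability_setC // PZ /= subr_gt0.
Qed.

Lemma mutually_independent_bool_gt0 (I : eqType) (Z : I -> T -> bool)
    (J : seq I) (b : I -> bool) :
  mutually_independent_bool P Z ->
  (forall i, measurable [set w | Z i w = true]) ->
  (forall i, i \in J -> 0 < fine (P [set w | Z i w = b i])) ->
  exists A : set T, [/\ measurable A, (0 < P A)%E &
    forall w, A w -> forall i, i \in J -> Z i w = b i].
Proof.
move=> indepZ mZ Jgt0.
exists (\bigcap_(i in [set` undup J]) [set w | Z i w = b i]); split.
- apply: fin_bigcap_measurable; first by apply/finite_seqP; exists (undup J).
  by move=> i _; exact: measurable_eq_bool.
- have : 0 < \prod_(i <- undup J) fine (P [set w | Z i w = b i]).
    by rewrite big_seq; apply: prodr_gt0 => i; rewrite mem_undup; exact: Jgt0.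
  rewrite -(indepZ _ _ (undup_uniq J)).
  by case: (P _) => [r| |] //=; rewrite ltxx.
- by move=> w Aw i iJ; apply: Aw => /=; rewrite mem_undup.
Qed.

End BooleanEvents.

Lemma dist_le_dist1 (R : realFieldType) (p x : R) :
  p <= 1 / 2 -> 0 <= x <= 1 -> `|x - p| <= `|1 - p|.
Proof.
move=> p_le_half /andP [x_ge0 x_le1]; rewrite (ger0_norm (x := 1 - p)); last by lra.
by rewrite ler_norml; apply/andP; split; lra.
Qed.

(* Cohort [i], subject [j] at level [u] is prescribed to be toxic iff [u != 1]. *)
Definition forced_outcomes (k s : nat) : seq (nat * nat * nat) :=
  if (2 <= s)%N then [seq ((i, j), s - i)%N | i <- iota 0 s.-1, j <- iota 0 k]
  else [seq ((0, j), 1)%N | j <- iota 0 k] ++ [seq ((1, j), 2)%N | j <- iota 0 k].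

Lemma forced_outcomes_level (k s : nat) i :
  i \in forced_outcomes k s -> (0 < i.2 <= maxn 2 s)%N.
Proof.
rewrite /forced_outcomes; case: ifP => s_ge2.
  by case/allpairsP=> [[a j] [/= + _ ->]]; rewrite mem_iota /=; lia.
by rewrite mem_cat => /orP [] /mapP [j _ ->] /=; lia.
Qed.

Section PointDesignTrap.
Variables (R : realType) (m k s : nat) (p : R) (y : nat -> nat -> nat -> bool).
Hypotheses (k_gt0 : (0 < k)%N) (p_gt0 : 0 < p) (p_lt_half : p < 1 / 2).

Local Notation fhat := (fhat R k y).
Local Notation observed_levels := (observed_levels m).
Local Notation next_level := (next_level m k s p y).
Local Notation allocs := (allocs m k s p y).
Local Notation alloc := (alloc m k s p y).

Lemma ntreated_sum h u :
  ntreated k h u = (\sum_(i < size h) (if nth 0%N h i == u then k else 0))%N.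
Proof.
rewrite /ntreated -sum1_count (big_nth 0%N) big_mkord big_mkcond big_distrr /=.
by apply: eq_bigr => i _; case: (_ == _); rewrite ?muln1 ?muln0.
Qed.

Lemma ntox_le_ntreated h u : (ntox k y h u <= ntreated k h u)%N.
Proof.
rewrite ntreated_sum; apply: leq_sum => i _; case: (_ == _) => //.
rewrite -[X in (_ <= X)%N]card_ord -sum1_card.
by apply: leq_sum => j _; case: (y _ _ _).
Qed.

Lemma fhat_ge0 h u : 0 <= fhat h u.
Proof. by rewrite /fhat divr_ge0. Qed.

Lemma fhat_le1 h u : fhat h u <= 1.
Proof.
rewrite /fhat; have := ntox_le_ntreated h u.
case: (ntreated k h u) => [|n le_tox]; first by rewrite invr0 mulr0.
by rewrite ler_pdivrMr ?ltr0Sn // mul1r ler_nat.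
Qed.

Lemma fhat_eq1 h u : u \in h ->
  (forall i, (i < size h)%N -> nth 0%N h i = u -> forall j, (j < k)%N -> y i j u) ->
  fhat h u = 1.
Proof.
move=> uh tox; rewrite /fhat; have -> : ntox k y h u = ntreated k h u.
  rewrite ntreated_sum; apply: eq_bigr => i _; case: eqP => // hiu.
  rewrite -[RHS]card_ord -sum1_card.
  by apply: eq_bigr => j _; rewrite tox.
rewrite divff // pnatr_eq0 /ntreated muln_eq0 negb_or -!lt0n k_gt0.
by rewrite -has_count has_pred1.
Qed.

Lemma fhat_eq0 h u :
  (forall i, (i < size h)%N -> nth 0%N h i = u -> forall j, (j < k)%N -> ~~ y i j u) ->
  fhat h u = 0.
Proof.
move=> notox; rewrite /fhat /ntox big1 ?mul0r // => i _.
case: eqP => // hiu; rewrite big1 // => j _.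
by rewrite (negbTE (notox _ (ltn_ord i) hiu _ (ltn_ord j))).
Qed.

Lemma fhat_rcons h x u : x != u -> fhat (rcons h x) u = fhat h u.
Proof.
move=> xu; rewrite /fhat /ntreated -cats1 count_cat /= (negbTE xu) !addn0 cats1.
rewrite /ntox size_rcons big_ord_recr /= nth_rcons ltnn eqxx (negbTE xu) addn0.
by congr (_%:R / _); apply: eq_bigr => i _; rewrite nth_rcons ltn_ord.
Qed.

Lemma mem_observed_levels h u :
  (u \in observed_levels h) = (u \in h) && (0 < u <= m)%N.
Proof. by rewrite mem_filter mem_iota add1n ltnS andbC. Qed.

Lemma sorted_observed_levels h : sorted ltn (observed_levels h).
Proof. exact: (sorted_filter ltn_trans _ (iota_ltn_sorted 1 m)). Qed.

Lemma head_observed_levels x0 h u : u \in observed_levels h ->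
  (forall v, v \in observed_levels h -> (u <= v)%N) ->
  head x0 (observed_levels h) = u.
Proof.
have := sorted_observed_levels h.
case: (observed_levels h) => [|a l] //= sorted_al.
rewrite in_cons => /orP [/eqP -> //|ul] umin; apply/eqP; rewrite eqn_leq.
rewrite umin ?mem_head // andbT; apply: ltnW.
by have /allP := order_path_min ltn_trans sorted_al; apply.
Qed.

Lemma last_observed_levels x0 h u : u \in observed_levels h ->
  (last x0 (observed_levels h) \in h) && (u <= last x0 (observed_levels h))%N.
Proof.
have := sorted_observed_levels h.
have : forall v, v \in observed_levels h -> v \in h.
  by move=> v; rewrite mem_observed_levels => /andP [].
elim: (observed_levels h) x0 => [|a l IHl] x0 //= inh sorted_al.
have /allP a_lt := order_path_min ltn_trans sorted_al.
have sorted_l := path_sorted sorted_al.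
rewrite in_cons => /orP [/eqP ->|ul]; last first.
  by apply: IHl => // v vl; apply: inh; rewrite in_cons vl orbT.
case: l {IHl sorted_al} inh sorted_l a_lt => [|b l] inh _ a_lt /=.
  by rewrite leqnn andbT inh ?mem_head.
have lastl : last b l \in b :: l by apply: mem_last.
rewrite inh /=; last by rewrite in_cons lastl orbT.
exact/ltnW/a_lt.
Qed.

Lemma closest_head h :
  (forall u, u \in observed_levels h ->
     ~~ (`|fhat h u - p| < `|fhat h (head s (observed_levels h)) - p|)) ->
  closest m k s p y h = head s (observed_levels h).
Proof.
rewrite /closest; case: (observed_levels h) => [|a l] //= not_closer.
elim: l not_closer => [|b l IHl] //= not_closer.
rewrite (negbTE (not_closer b _)); last by rewrite !in_cons eqxx orbT.
apply: IHl => u; rewrite in_cons => /orP [/eqP -> | ul]; apply: not_closer.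
  exact: mem_head.
by rewrite !in_cons ul !orbT.
Qed.

Definition trapped (h : seq nat) : Prop :=
  [/\ 1%N \in h, exists2 w, w \in h & (1 < w <= m)%N &
      forall u, u \in h -> u != 1%N -> fhat h u = 1].

Lemma next_level_trapped h : trapped h -> next_level h = 1%N.
Proof.
case=> h1 [w wh /andP [w_gt1 w_le_m]] fhat1.
have w_obs : w \in observed_levels h by rewrite mem_observed_levels wh w_le_m; lia.
have lo1 : head s (observed_levels h) = 1%N.
  apply: head_observed_levels; first by rewrite mem_observed_levels h1 /=; lia.
  by move=> v; rewrite mem_observed_levels => /andP [_ /andP []].
have /andP [hi_h w_le_hi] := last_observed_levels s w_obs.
have p_lt1 : p < 1 by move: p_lt_half; lra.
rewrite /next_level lo1 fhat1 //=; last by apply/eqP; lia.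
rewrite ltNge (ltW p_lt1) andbF closest_head lo1 // => u.
rewrite mem_observed_levels => /andP [uh _].
have [-> | u1] := eqVneq u 1%N; first by rewrite ltxx.
by rewrite fhat1 // -leNgt dist_le_dist1 ?fhat_ge0 ?fhat_le1 ?(ltW p_lt_half).
Qed.

Lemma trapped_rcons h : trapped h -> trapped (rcons h 1%N).
Proof.
case=> h1 [w wh w_range] fhat1; split.
- by rewrite mem_rcons mem_head.
- by exists w; rewrite // mem_rcons in_cons wh orbT.
- move=> u; rewrite mem_rcons in_cons => /orP [/eqP -> //|uh] u1.
  by rewrite fhat_rcons 1?eq_sym // fhat1.
Qed.

Lemma trapped_alloc N : trapped (allocs N) -> forall n, (N < n)%N -> alloc n = 1%N.
Proof.
move=> trapN; have trap n : trapped (allocs (N + n)).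
  elim: n => [|n IHn]; first by rewrite addn0.
  by rewrite addnS /= next_level_trapped //; apply: trapped_rcons.
move=> n /subnKC <-; rewrite addSn.
by rewrite /alloc /= last_rcons next_level_trapped.
Qed.

Hypothesis forced :
  forall i, i \in forced_outcomes k s -> y i.1.1 i.1.2 i.2 = (i.2 != 1%N).

Section Descent.
Hypotheses (s_ge2 : (2 <= s)%N) (s_le_m : (s <= m)%N).

Let descent n := mkseq (fun i => s - i)%N n.+1.

Lemma mem_descent n u : (n < s)%N -> (u \in descent n) = (s - n <= u <= s)%N.
Proof.
move=> n_lt_s; apply/mapP/idP => [[i] |u_range].
  by rewrite mem_iota => /andP [_ i_le_n] ->; lia.
by exists (s - u)%N; rewrite ?mem_iota /=; lia.
Qed.

Lemma fhat_descent n u : (n < s)%N -> u \in descent n -> u != 1%N ->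
  fhat (descent n) u = 1.
Proof.
move=> n_lt_s uh u1; apply: fhat_eq1 => // i; rewrite size_mkseq => i_le_n.
rewrite nth_mkseq // => hiu j j_lt_k.
have forced_ij : ((i, j), s - i)%N \in forced_outcomes k s.
  rewrite /forced_outcomes ifT //; apply: (allpairs_f (fun i j => ((i, j), s - i)%N)).
  - by rewrite mem_iota; move: u1 => /eqP; lia.
  - by rewrite mem_iota.
by have := forced forced_ij; rewrite /= hiu (negPf u1).
Qed.

Lemma next_level_descent n : (n < s.-1)%N -> next_level (descent n) = (s - n.+1)%N.
Proof.
move=> n_lt; have n_lt_s : (n < s)%N by lia.
have fhat1 u : u \in descent n -> fhat (descent n) u = 1.
  move=> uh; apply: fhat_descent => //.
  by move: uh; rewrite mem_descent // => ?; apply/eqP; lia.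
have lo_h : (s - n)%N \in descent n by rewrite mem_descent //; lia.
have s_obs : s \in observed_levels (descent n).
  by rewrite mem_observed_levels mem_descent //; lia.
have /andP [hi_h _] := last_observed_levels s s_obs.
have lo : head s (observed_levels (descent n)) = (s - n)%N.
  apply: head_observed_levels; first by rewrite mem_observed_levels lo_h; lia.
  by move=> v; rewrite mem_observed_levels mem_descent // => /andP [/andP []].
have p_lt1 : p < 1 by move: p_lt_half; lra.
rewrite /next_level lo !fhat1 // ltNge (ltW p_lt1) p_lt1 /=.
have lo_gt1 : (1 < s - n)%N by lia.
rewrite lo_gt1 /=; lia.
Qed.

Lemma allocs_descent n : (n <= s.-1)%N -> allocs n = descent n.
Proof.
elim: n => [|n IHn] n_le; first by rewrite /descent /mkseq /= subn0.
by rewrite /= IHn 1?ltnW // next_level_descent // /descent [in RHS]mkseqS.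
Qed.

Lemma trapped_descent : trapped (allocs s.-1).
Proof.
have s1_lt_s : (s.-1 < s)%N by lia.
rewrite allocs_descent //; split.
- by rewrite mem_descent //; lia.
- by exists s; rewrite ?mem_descent //; lia.
- move=> u uh u1; exact: fhat_descent.
Qed.

End Descent.

Lemma trapped_ascent : s = 1%N -> (2 <= m)%N -> trapped (allocs 1).
Proof.
move=> s1 m_ge2.
have y0 j : (j < k)%N -> ~~ y 0 j 1.
  move=> j_lt_k; have := @forced ((0, j), 1)%N; rewrite /= => -> //.
  rewrite /forced_outcomes s1 mem_cat; apply/orP; left.
  by apply: map_f; rewrite mem_iota.
have y1 j : (j < k)%N -> y 1 j 2.
  move=> j_lt_k; have := @forced ((1, j), 2)%N; rewrite /= => -> //.
  rewrite /forced_outcomes s1 mem_cat; apply/orP; right.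
  by apply: map_f; rewrite mem_iota.
have obs1 : 1%N \in observed_levels [:: 1%N].
  by rewrite mem_observed_levels mem_head /=; lia.
have /andP [] := last_observed_levels 1%N obs1; rewrite mem_seq1 => /eqP hi1 _.
have -> : allocs 1 = [:: 1%N; 2%N].
  rewrite /= /next_level s1 hi1 (@fhat_eq0 [:: 1%N]) ?p_gt0 /=; last first.
    by case=> [|i] //= _ _ j; apply: y0.
  by rewrite ifT //; lia.
split=> [||u]; rewrite ?mem_head //; first by exists 2%N; rewrite ?inE.
rewrite !inE => /orP [/eqP -> | /eqP ->] //= _.
apply: fhat_eq1; first by rewrite !inE.
by case=> [|[|i]] //= _ _; apply: y1.
Qed.

Lemma eventually_alloc1 : (0 < s <= m)%N -> (2 <= m)%N ->
  exists N, forall n, (N < n)%N -> alloc n = 1%N.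
Proof.
move=> /andP [s_gt0 s_le_m] m_ge2; case: (leqP 2 s) => [s_ge2 | s_lt2].
- by exists s.-1; apply: trapped_alloc; exact: trapped_descent.
- by exists 1%N; apply: trapped_alloc; apply: trapped_ascent => //; lia.
Qed.

End PointDesignTrap.

Theorem mainTheorem4
  (R : realType) (F : R -> R) (m : nat) (dose : nat -> R) (p : R)
  (ustar k s : nat)
  (d : measure_display) (T : measurableType d) (P : probability T R)
  (Y : nat -> nat -> nat -> T -> bool) :
  (forall x y : R, x < y -> F x < F y) ->
  (forall x : R, 0 <= F x <= 1) ->
  (forall u v : nat, (1 <= u)%N -> (u < v)%N -> (v <= m)%N -> dose u < dose v) ->
  0 < p -> p < 1 / 2 ->
  (2 <= ustar)%N -> (ustar <= m)%N ->
  F (dose ustar) = p -> F (dose ustar.-1) < p ->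
  (1 <= k)%N ->
  (1 <= s)%N -> (s < ustar)%N ->
  (forall n j u, measurable [set w | Y n j u w = true]) ->
  (forall n j u, (1 <= u <= m)%N -> P [set w | Y n j u w = true] = (F (dose u))%:E) ->
  mutually_independent_bool P (fun i : nat * nat * nat => Y i.1.1 i.1.2 i.2) ->
  exists A : set T, measurable A /\ (0 < P A)%E /\
    A `<=` [set w | ~ converges_to m k s p (fun n j u => Y n j u w) ustar].
Proof.
move=> F_incr F01 dose_incr p_gt0 p_lt_half us_ge2 us_le_m F_us _ k_gt0 s_gt0 s_lt_us
  Y_meas PY indepY.
pose b (i : nat * nat * nat) := i.2 != 1%N.
have forced_gt0 i : i \in forced_outcomes k s ->
    0 < fine (P [set w | Y i.1.1 i.1.2 i.2 w = b i]).
  move=> /forced_outcomes_level i_range.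
  have F_d1_lt u : (1 < u <= m)%N -> F (dose 1%N) < F (dose u).
    by move=> u_range; apply/F_incr/dose_incr => //; lia.
  apply: prob_eq_bool_gt0 (Y_meas _ _ _) (PY _ _ _ _) _; first by lia.
  rewrite /b; case: eqVneq => [-> | i_ne1] /=.
    by have := F_d1_lt ustar (ltac:(lia)); rewrite F_us => ?; lra.
  have i_gt1 : (1 < i.2 <= m)%N.
    by move: i_ne1 i_range; case: i => [[? ?] u] /= /eqP; lia.
  have := F_d1_lt _ i_gt1; have /andP [? _] := F01 (dose 1%N).
  by move=> ?; lra.
have [A [mA PA A_forced]] :=
  mutually_independent_bool_gt0 indepY (fun i => Y_meas _ _ _) forced_gt0.
exists A; split=> //; split=> // w Aw [N conv].
have [N' trap] := @eventually_alloc1 R m k s p (fun n j u => Y n j u w)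
  k_gt0 p_gt0 p_lt_half (A_forced w Aw) (ltac:(lia)) (ltac:(lia)).
have := trap (maxn N N'.+1) (ltac:(lia)); rewrite conv; lia.
Qed.
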